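(* Let $G$ be a Polish group that is not locally compact. Then every compact subset of $G$ is right Haar null.
   Context: A Polish group is a topological group whose topology is separable and completely metrizable. A set $A\subseteq G$ is right Haar null if there are a Borel set $B\supseteq A$ and a Borel probability measure $\mu$ on $G$ such that $\mu(Bg)=0$ for every $g\in G$. *)

From HB Require Import structures.
From mathcomp Require Import all_boot all_order all_algebra.
From mathcomp Require Import all_classical all_reals all_analysis.
From mathcomp Require Import Rstruct Rstruct_topology.
From Stdlib Require Import Rdefinitions.

Set Implicit Arguments.
Unset Strict Implicit.
Unset Printing Implicit Defensive.

Import Order.TTheory GRing.Theory Num.Theory.
Local Open Scope classical_set_scope.
Local Open Scope ring_scope.

Notation RR := Rdefinitions.R.

Definition is_topological_group (G : ptopologicalType)
    (mul : G -> G -> G) (inv : G -> G) (one : G) : Prop :=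
  [/\ (forall x y z, mul x (mul y z) = mul (mul x y) z),
      (forall x, mul one x = x /\ mul x one = x),
      (forall x, mul (inv x) x = one /\ mul x (inv x) = one),
      continuous (fun p : G * G => mul p.1 p.2)
    & continuous inv].

Definition separable_space (G : topologicalType) : Prop :=
  exists D : set G, countable D /\ dense D.

Definition is_metric (G : Type) (d : G -> G -> RR) : Prop :=
  [/\ (forall x y, 0 <= d x y),
      (forall x y, d x y = 0 <-> x = y),
      (forall x y, d x y = d y x)
    & (forall x y z, d x z <= d x y + d y z)].

Definition metric_induces_topology (G : topologicalType) (d : G -> G -> RR)
  : Prop :=
  forall (x : G) (A : set G),
    nbhs x A <-> exists2 eps : RR, 0 < eps & [set y | d x y < eps] `<=` A.

Definition complete_metric (G : Type) (d : G -> G -> RR) : Prop :=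
  forall u : nat -> G,
    (forall eps : RR, 0 < eps ->
       exists N : nat, forall m n : nat, leq N m -> leq N n ->
         d (u m) (u n) < eps) ->
    exists l : G, forall eps : RR, 0 < eps ->
       exists N : nat, forall n : nat, leq N n -> d (u n) l < eps.

Definition completely_metrizable (G : topologicalType) : Prop :=
  exists d : G -> G -> RR,
    [/\ is_metric d, metric_induces_topology d & complete_metric d].

Definition polish_space (G : topologicalType) : Prop :=
  separable_space G /\ completely_metrizable G.

Definition borel (G : ptopologicalType) : set (set G) := <<s @open G >>.

Definition borel_probability (G : ptopologicalType) :=
  probability (g_sigma_algebraType (@open G)) RR.

Definition rtranslate (G : Type) (mul : G -> G -> G) (B : set G) (g : G)
  : set G := [set mul b g | b in B].

Definition right_haar_null (G : ptopologicalType) (mul : G -> G -> G)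
    (A : set G) : Prop :=
  exists B : set G, [/\ borel B, A `<=` B &
    exists mu : borel_probability G,
      forall g : G, mu (rtranslate mul B g : set (g_sigma_algebraType (@open G))) = 0%E].

From mathcomp Require Import all_boot all_order all_algebra.
From mathcomp Require Import all_classical all_reals all_analysis.
From mathcomp Require Import Rstruct Rstruct_topology lra.

Import Order.TTheory GRing.Theory Num.Theory Num.Def.
Local Open Scope classical_set_scope.
Local Open Scope ring_scope.

(* Let L := K K^-1, a compact set.  Since G is not locally compact, arbitrarily
   close to any point p there is a point q with q p^-1 outside L.  Iterating this
   with a complete metric gives a Cantor scheme of balls whose two children are
   separated at every node: y z^-1 is not in L when y lies in the odd child and
   z in the even one.  The branch coded by the binary digits of t in [0, 1[
   converges to a point f t, f is Borel, and for t <> t' one of f t (f t')^-1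
   and f t' (f t)^-1 lies outside L.  As (a g) (b g)^-1 = a b^-1, every right
   translate K g meets f [0, 1[ at most once, so the push-forward under f of the
   uniform distribution on [0, 1/2] gives measure 0 to every K g. *)

Section DyadicDigits.
Context {R : realType}.

Definition dyadic_digits (t : R) (n : nat) : nat := truncn (2 ^+ n * t).

Lemma truncn_double_half (x : R) : (truncn (2 * x))./2 = truncn x.
Proof.
have [x_lt0|x_ge0] := ltP x 0.
  rewrite !(truncn0Pn _ _) //; rewrite -ltNge; lra.
set j := truncn (2 * x).
have /andP[jx xj] := truncn_itv (ltac:(lra) : 0 <= 2 * x).
have j_odd : (j%:R : R) = (j./2)%:R * 2 + (odd j)%:R.
  by rewrite -natrM -natrD muln2 addnC odd_double_half.
have odd_ge0 : (0 : R) <= (odd j)%:R by [].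
have odd_le1 : ((odd j)%:R : R) <= 1 by case: (odd j).
apply/esym/truncn_def; rewrite -natr1 in xj *; rewrite -/j in jx xj; apply/andP; split; lra.
Qed.

Lemma dyadic_digitsS t n : (dyadic_digits t n.+1)./2 = dyadic_digits t n.
Proof. by rewrite /dyadic_digits exprS -mulrA truncn_double_half. Qed.

Lemma dyadic_digits0 (t : R) : t < 1 -> dyadic_digits t 0 = 0%N.
Proof. by move=> t_lt1; rewrite /dyadic_digits mul1r; apply/truncn0Pn; rewrite -ltNge. Qed.

Lemma truncn_eqE (x : R) k : (truncn x = k) = (x < k.+1%:R /\ (k = 0%N \/ k%:R <= x)).
Proof.
rewrite propeqE; split=> [<-|[xk kx]].
  split; first by rewrite -truncn_le_nat.
  by case E: (truncn x) => [|m]; [left | right; rewrite -truncn_gt_nat E].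
apply/eqP; rewrite eqn_leq truncn_le_nat xk /=.
by case: k kx {xk} => [|m] [] // mx; rewrite truncn_gt_nat.
Qed.

Lemma measurable_dyadic_digits n k : measurable [set t : R | dyadic_digits t n = k].
Proof.
have -> : [set t : R | dyadic_digits t n = k] = *%R (2 ^+ n) @^-1`
    (`]-oo, k.+1%:R[ `&` (if k is 0%N then setT else `[k%:R, +oo[)).
  apply/seteqP; split=> t; rewrite /= /dyadic_digits truncn_eqE;
    case: k => [|m]; rewrite /= ?in_itv /= ?andbT => -[xk kx]; split=> //.
    - by case: kx.
    - by left.
    - by right.
rewrite -[X in measurable X]setTI.
by apply: measurable_realfun.mulrl_measurable => //; apply: measurableI => //; case: k.
Qed.

Lemma dyadic_digits_inj (t t' : R) : 0 <= t -> 0 <= t' ->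
  dyadic_digits t =1 dyadic_digits t' -> t = t'.
Proof.
move=> t_ge0 t'_ge0 eq_digits; apply: contrapT => /eqP neq_tt'.
have dist_gt0 : 0 < `|t - t'| by rewrite normr_gt0 subr_eq0.
have close n : 2 ^+ n * `|t - t'| < 1.
  have pow_gt0 : (0 : R) < 2 ^+ n by apply: exprn_gt0.
  have /andP[t1 t2] := truncn_itv (mulr_ge0 (ltW pow_gt0) t_ge0).
  have /andP[t'1 t'2] := truncn_itv (mulr_ge0 (ltW pow_gt0) t'_ge0).
  rewrite -/(dyadic_digits t n) eq_digits -natr1 in t1 t2.
  rewrite -/(dyadic_digits t' n) -natr1 in t'1 t'2.
  rewrite -(@ger0_norm _ (2 ^+ n)) ?ltW // -normrM mulrBr ltr_norml; apply/andP; split; lra.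
set n := truncn `|t - t'|^-1.
have inv_lt : `|t - t'|^-1 < n.+1%:R by exact: truncnS_gt.
have n_lt_pow : (n.+1%:R : R) < 2 ^+ n.+1 by rewrite -natrX ltr_nat ltn_expl.
have := close n.+1; rewrite -ltr_pdivlMr // div1r; lra.
Qed.

End DyadicDigits.

Lemma uniform_prob_subset1 (R : realType) (a b : R) (ab : a < b) (A : set R) :
  measurable A -> is_subset1 (A `&` `[a, b]) -> uniform_prob ab A = 0%E.
Proof.
move=> mA Aab_subset1.
have mAab : measurable (A `&` `[a, b]) by exact: measurableI.
have [t0 Aab_t0] : exists t0, A `&` `[a, b] `<=` [set t0].
  have [[t0 Aab_t0] | Aab_empty] := pselect (exists t0, (A `&` `[a, b]) t0).
    by exists t0 => t Aab_t; exact: Aab_subset1.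
  by exists a => t Aab_t; case: Aab_empty; exists t.
have lebesgue_null : lebesgue_measure (A `&` `[a, b]) = 0%E.
  apply/eqP; rewrite eq_le measure_ge0 andbT -(lebesgue_measure_set1 t0).
  by apply: le_measure; rewrite ?inE.
have -> : uniform_prob ab A = uniform_prob ab (A `&` `[a, b]).
  by rewrite /uniform_prob integral_uniform_pdf [RHS]integral_uniform_pdf -setIA setIid.
exact: (null_content_dominatesP _ _).1 (dominates_uniform_prob ab) _ mAab lebesgue_null.
Qed.

Lemma closed_borel {G : ptopologicalType} {A : set G} : closed A -> borel A.
Proof.
move=> A_closed; rewrite -[A]setCK; apply: (@measurableC _ (g_sigma_algebraType (@open G))).
by apply: sub_sigma_algebra; exact: closed_openC.
Qed.

Section TopologicalGroup.
Context {G : ptopologicalType} {mul : G -> G -> G} {inv : G -> G} {one : G}.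
Hypothesis HG : is_topological_group mul inv one.

Lemma tg_mulA x y z : mul x (mul y z) = mul (mul x y) z.
Proof. by case: HG. Qed.

Lemma tg_mul1 x : mul one x = x.
Proof. by case: HG => _ /(_ x) []. Qed.

Lemma tg_mulr1 x : mul x one = x.
Proof. by case: HG => _ /(_ x) []. Qed.

Lemma tg_mulV x : mul x (inv x) = one.
Proof. by case: HG => _ _ /(_ x) []. Qed.

Lemma tg_mulVl x : mul (inv x) x = one.
Proof. by case: HG => _ _ /(_ x) []. Qed.

Lemma tg_mulgK c x : mul (mul x c) (inv c) = x.
Proof. by rewrite -tg_mulA tg_mulV tg_mulr1. Qed.

Lemma tg_mulgKV c x : mul (mul x (inv c)) c = x.
Proof. by rewrite -tg_mulA tg_mulVl tg_mulr1. Qed.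

Lemma tg_mul_rtranslate_inv a b g : mul (mul a g) (inv (mul b g)) = mul a (inv b).
Proof.
have inv_mul : inv (mul b g) = mul (inv g) (inv b).
  rewrite -[RHS]tg_mul1 -(tg_mulVl (mul b g)) -!tg_mulA [mul g (mul _ _)]tg_mulA.
  by rewrite tg_mulV tg_mul1 tg_mulV tg_mulr1.
by rewrite inv_mul -tg_mulA [mul g _]tg_mulA tg_mulV tg_mul1.
Qed.

Lemma continuous_mulr c : continuous (mul^~ c).
Proof.
case: HG => _ _ _ mul_cont _ x.
have pair_cont : {for x, continuous (fun y : G => (y, c))}.
  by apply: cvg_pair; [exact: cvg_id | exact: cvg_cst].
exact: continuous_comp pair_cont (mul_cont _).
Qed.

Lemma continuous_mul_inv : continuous (fun z : G * G => mul z.1 (inv z.2)).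
Proof.
case: HG => _ _ _ mul_cont inv_cont z.
have pair_cont : {for z, continuous (fun w : G * G => (w.1, inv w.2))}.
  by apply: cvg_pair; [exact: cvg_fst | exact: continuous_comp cvg_snd (inv_cont _)].
exact: continuous_comp pair_cont (mul_cont _).
Qed.

Lemma compact_rtranslate (A : set G) g : compact A -> compact (rtranslate mul A g).
Proof. by apply: continuous_compact; apply: continuous_subspaceT; exact: continuous_mulr. Qed.

Definition divset (K : set G) : set G := [set mul z.1 (inv z.2) | z in K `*` K].

(* [(y, z)] is in [rtranslate_rel K] iff [y] and [z] lie in a common right
   translate of [K]. *)
Definition rtranslate_rel (K : set G) : set (G * G) := [set z | divset K (mul z.1 (inv z.2))].

Lemma rtranslate_rel_clique (K : set G) g :
  rtranslate mul K g `*` rtranslate mul K g `<=` rtranslate_rel K.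
Proof.
move=> [y z] [/= [a Ka <-] [b Kb <-]]; exists (a, b) => //.
by rewrite tg_mul_rtranslate_inv.
Qed.

Lemma compact_divset {K : set G} : compact K -> compact (divset K).
Proof.
move=> K_compact; apply: continuous_compact (compact_setX K_compact K_compact).
exact/continuous_subspaceT/continuous_mul_inv.
Qed.

Lemma closed_rtranslate_rel {K : set G} :
  hausdorff_space G -> compact K -> closed (rtranslate_rel K).
Proof.
move=> G_hausdorff K_compact; apply: preimage_closed.
  by move=> z _; exact: continuous_mul_inv z.
exact: compact_closed (compact_divset K_compact).
Qed.

(* If every point near p were in L p, then every neighbourhood of any x would
   sit inside the compact set L x. *)
Lemma not_locally_compact_escape {L : set G} :
    hausdorff_space G -> ~ locally_compact [set: G] -> compact L ->
  forall p U, nbhs p U -> exists2 q, U q & ~ L (mul q (inv p)).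
Proof.
move=> G_hausdorff G_nlc L_compact p U pU; apply: contrapT => no_escape.
have U_sub q : U q -> L (mul q (inv p)).
  by move=> Uq; apply: contrapT => nL; apply: no_escape; exists q.
apply: G_nlc => x _; rewrite withinET.
have Lx_compact : compact (rtranslate mul L x) := compact_rtranslate L x L_compact.
exists (rtranslate mul L x); last by split=> //; exact: compact_closed.
have near_p : nbhs x ((mul^~ p \o mul^~ (inv x)) @^-1` U).
  apply: (continuous_comp (continuous_mulr (inv x) x) (continuous_mulr p _)).
  by rewrite /= tg_mulV tg_mul1.
apply: filterS near_p => y /U_sub; rewrite /= tg_mulgK => Lyx.
by exists (mul y (inv x)) => //; rewrite tg_mulgKV.
Qed.

End TopologicalGroup.

Section MetricTopology.
Context {G : topologicalType} {d : G -> G -> RR}.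
Hypotheses (d_metric : is_metric d) (d_top : metric_induces_topology d).

Lemma is_metric_ge0 x y : 0 <= d x y.
Proof. by case: d_metric. Qed.

Lemma is_metric_sym x y : d x y = d y x.
Proof. by case: d_metric. Qed.

Lemma is_metric_triangle x y z : d x z <= d x y + d y z.
Proof. by case: d_metric. Qed.

Lemma is_metric_xx x : d x x = 0.
Proof. by case: d_metric => _ /(_ x x) [_ ->]. Qed.

Lemma nbhs_induced_ball (x : G) {e : RR} : 0 < e -> nbhs x [set y | d x y < e].
Proof. by move=> e_gt0; apply/d_top; exists e. Qed.

Lemma induced_hausdorff : hausdorff_space G.
Proof.
move=> p q pq_close; case: d_metric => _ /(_ p q) [dpq0 _] _ _; apply/dpq0/eqP.
rewrite eq_le is_metric_ge0 andbT leNgt; apply/negP => dpq_gt0.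
have half_gt0 : 0 < d p q / 2 by lra.
have [y [/= py qy]] := pq_close _ _ (nbhs_induced_ball p half_gt0) (nbhs_induced_ball q half_gt0).
have := is_metric_triangle p y q; rewrite (is_metric_sym y q); lra.
Qed.

End MetricTopology.

Section CantorScheme.
Context {G : ptopologicalType} {d : G -> G -> RR}.
Hypotheses (d_metric : is_metric d) (d_top : metric_induces_topology d)
  (d_complete : complete_metric d).
Context {E : set (G * G)}.
Hypotheses (E_closed : closed E)
  (E_escape : forall p U, nbhs p U -> exists2 q, U q & ~ E (q, p)).

(* The limit of a branch lies within twice the radius of each of its nodes,
   hence separation is required on the doubled balls. *)
Definition split_ball_spec (p : G) (rho : RR) (qr : G * RR) :=
  [/\ 0 < qr.2, qr.2 <= rho / 8, d p qr.1 < rho / 2 &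
    forall y z, d qr.1 y < 2 * qr.2 -> d p z < 2 * qr.2 -> ~ E (y, z)].

Lemma exists_split_ball_spec (p : G) {rho : RR} : 0 < rho -> exists qr, split_ball_spec p rho qr.
Proof.
move=> rho_gt0; have half_gt0 : 0 < rho / 2 by lra.
have [q pq not_Eqp] := E_escape _ _ (nbhs_induced_ball d_top p half_gt0).
have : nbhs (q, p) (~` E) by apply: open_nbhs_nbhs; split=> //; exact: closed_openC.
case=> -[A B] /= [qA pB] AB_sub.
have [e1 e1_gt0 e1A] := (d_top q A).1 qA.
have [e2 e2_gt0 e2B] := (d_top p B).1 pB.
set m := Num.min (Num.min e1 e2) (rho / 4).
have m_gt0 : 0 < m by rewrite !lt_min e1_gt0 e2_gt0 /=; lra.
have [m_e1 m_e2 m_rho] : [/\ m <= e1, m <= e2 & m <= rho / 4].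
  by split; rewrite /m !ge_min ?lexx ?orbT.
exists (q, m / 2); split=> /=; [lra | lra | done |].
move=> y z qy pz; apply: (AB_sub (y, z)); split; [apply: e1A | apply: e2B]; rewrite /=; lra.
Qed.

Definition split_ball p rho : G * RR := [get qr | split_ball_spec p rho qr].

Lemma split_ballP (p : G) {rho : RR} : 0 < rho -> split_ball_spec p rho (split_ball p rho).
Proof. by move=> rho_gt0; apply: getPex; exact: exists_split_ball_spec. Qed.

(* [cantor_node n (dyadic_digits t n)] runs down the branch given by the binary
   expansion of [t]. *)
Fixpoint cantor_node (n k : nat) : G * RR :=
  if n is n'.+1 then
    let parent := cantor_node n' k./2 in
    let child := split_ball parent.1 parent.2 in
    (if odd k then child.1 else parent.1, child.2)
  else (point, 1).

Definition cantor_ball n k := [set y | d (cantor_node n k).1 y < 2 * (cantor_node n k).2].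

Lemma cantor_node_gt0 n k : 0 < (cantor_node n k).2.
Proof.
elim: n k => [|n IHn] k /=; first lra.
by have [] := split_ballP (cantor_node n k./2).1 (IHn k./2).
Qed.

Lemma cantor_node_step n k :
  d (cantor_node n k./2).1 (cantor_node n.+1 k).1 + (cantor_node n.+1 k).2
    <= (cantor_node n k./2).2 /\
  (cantor_node n.+1 k).2 <= (cantor_node n k./2).2 / 8.
Proof.
have := split_ballP (cantor_node n k./2).1 (cantor_node_gt0 n k./2).
by case=> *; rewrite /=; case: (odd k); rewrite ?(is_metric_xx d_metric) //; split; lra.
Qed.

Lemma cantor_node_sep {n j j' : nat} {y z : G} : j./2 = j'./2 -> odd j -> ~~ odd j' ->
  cantor_ball n.+1 j y -> cantor_ball n.+1 j' z -> ~ E (y, z).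
Proof.
move=> same_parent odd_j even_j'; rewrite /cantor_ball /= odd_j (negbTE even_j') -same_parent.
by have [_ _ _] := split_ballP (cantor_node n j./2).1 (cantor_node_gt0 n j./2); apply.
Qed.

Definition cantor_center (t : RR) n := (cantor_node n (dyadic_digits t n)).1.
Definition cantor_radius (t : RR) n := (cantor_node n (dyadic_digits t n)).2.

Lemma cantor_center_step t {n m : nat} : (n <= m)%N ->
  d (cantor_center t n) (cantor_center t m) + cantor_radius t m <= cantor_radius t n.
Proof.
elim: m => [|m IHm]; rewrite leq_eqVlt => /predU1P[-> | n_lt];
  rewrite ?(is_metric_xx d_metric) ?add0r //.
have := IHm n_lt; have [step _] := cantor_node_step m (dyadic_digits t m.+1).
rewrite dyadic_digitsS in step; rewrite /cantor_center /cantor_radius in IHm step *.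
have := is_metric_triangle d_metric (cantor_node n (dyadic_digits t n)).1
  (cantor_node m (dyadic_digits t m)).1 (cantor_node m.+1 (dyadic_digits t m.+1)).1.
lra.
Qed.

Lemma cantor_radius_le t n : cantor_radius t n * n.+1%:R <= 1.
Proof.
elim: n => [|n IHn]; first by rewrite /cantor_radius /= mulr1.
have [_ shrink] := cantor_node_step n (dyadic_digits t n.+1).
rewrite dyadic_digitsS -/(cantor_radius t n) -/(cantor_radius t n.+1) in shrink.
have := cantor_node_gt0 n.+1 (dyadic_digits t n.+1); rewrite -/(cantor_radius t n.+1).
have n_ge0 : (0 : RR) <= n%:R by [].
rewrite -!natr1 in IHn *; nra.
Qed.

Lemma cantor_radius_small t {eps : RR} : 0 < eps -> exists N, 2 * cantor_radius t N < eps.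
Proof.
move=> eps_gt0; exists (truncn (2 / eps)).
have := cantor_radius_le t (truncn (2 / eps)).
have := truncnS_gt (2 / eps); rewrite ltr_pdivrMr // mulrC => N_gt.
have := cantor_node_gt0 (truncn (2 / eps)) (dyadic_digits t (truncn (2 / eps))).
rewrite -/(cantor_radius _ _); nra.
Qed.

Definition cantor_limit (t : RR) (l : G) := forall eps, 0 < eps ->
  exists N, forall n, (N <= n)%N -> d (cantor_center t n) l < eps.

Lemma exists_cantor_limit t : exists l, cantor_limit t l.
Proof.
apply: d_complete => eps eps_gt0.
have [N N_small] := cantor_radius_small t eps_gt0; exists N => m n Nm Nn.
have := cantor_center_step t Nm; have := cantor_center_step t Nn.
have := is_metric_triangle d_metric (cantor_center t m) (cantor_center t N) (cantor_center t n).
have := cantor_node_gt0 m (dyadic_digits t m); have := cantor_node_gt0 n (dyadic_digits t n).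
rewrite (is_metric_sym d_metric (cantor_center t m) (cantor_center t N)).
rewrite /cantor_radius in N_small *; lra.
Qed.

Definition cantor_point (t : measurableTypeR RR) : g_sigma_algebraType (@open G) :=
  [get l | cantor_limit t l].

Lemma cantor_pointP t n : cantor_ball n (dyadic_digits t n) (cantor_point t).
Proof.
have [N N_lim] := getPex (exists_cantor_limit t) _ (cantor_node_gt0 n (dyadic_digits t n)).
have := N_lim _ (leq_maxl N n); have := cantor_center_step t (leq_maxr N n).
have := is_metric_triangle d_metric
  (cantor_center t n) (cantor_center t (maxn N n)) (cantor_point t).
have := cantor_node_gt0 (maxn N n) (dyadic_digits t (maxn N n)).
rewrite /cantor_ball /= /cantor_radius /cantor_center; lra.
Qed.

Lemma measurable_cantor_point :
  measurable_fun [set: measurableTypeR RR] cantor_point.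
Proof.
apply: (@measurability _ _ _ _ setT cantor_point (@open G)) => // _ [U U_open <-]; rewrite setTI.
have -> : cantor_point @^-1` U = \bigcup_n \bigcup_(k in [set k | cantor_ball n k `<=` U])
    [set t : measurableTypeR RR | dyadic_digits t n = k].
  apply/seteqP; split=> t /=; last first.
    by move=> [n _ [k /= ballU digits_k]]; apply: ballU; rewrite -digits_k; exact: cantor_pointP.
  move=> Ut; have [e e_gt0 ballU] := (d_top _ U).1 (open_nbhs_nbhs (conj U_open Ut)).
  have [N N_small] := cantor_radius_small t (ltac:(lra) : 0 < e / 2).
  exists N => //; exists (dyadic_digits t N) => //= y y_near; apply: ballU => /=.
  have := cantor_pointP t N.
  have := is_metric_triangle d_metric (cantor_point t) (cantor_center t N) y.
  rewrite /cantor_ball /= -/(cantor_center t N) -/(cantor_radius t N) in y_near *.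
  rewrite (is_metric_sym d_metric (cantor_point t) (cantor_center t N)); lra.
apply: bigcupT_measurable => n; apply: bigcup_measurable => k _.
exact: measurable_dyadic_digits.
Qed.

Lemma cantor_point_sep t t' : dyadic_digits t 0 = dyadic_digits t' 0 ->
  E (cantor_point t, cantor_point t') -> E (cantor_point t', cantor_point t) ->
  dyadic_digits t =1 dyadic_digits t'.
Proof.
move=> same_root E_tt' E_t't; elim=> [//|n IHn].
have same_parent : (dyadic_digits t n.+1)./2 = (dyadic_digits t' n.+1)./2.
  by rewrite !dyadic_digitsS IHn.
rewrite -(odd_double_half (dyadic_digits t n.+1)) -(odd_double_half (dyadic_digits t' n.+1)).
rewrite same_parent.
case odd_t : (odd (dyadic_digits t n.+1)); case odd_t' : (odd (dyadic_digits t' n.+1)) => //.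
- have sep := cantor_node_sep same_parent odd_t (negbT odd_t')
    (cantor_pointP t n.+1) (cantor_pointP t' n.+1).
  by case: (sep E_tt').
- have sep := cantor_node_sep (esym same_parent) odd_t' (negbT odd_t)
    (cantor_pointP t' n.+1) (cantor_pointP t n.+1).
  by case: (sep E_t't).
Qed.

Lemma cantor_point_clique_inj {S : set G} : S `*` S `<=` E ->
  {in `[0, 1[ &, forall t t', S (cantor_point t) -> S (cantor_point t') -> t = t'}.
Proof.
move=> S_clique t t'; rewrite !in_itv /= => /andP[t_ge0 t_lt1] /andP[t'_ge0 t'_lt1] St St'.
apply: dyadic_digits_inj => //; apply: cantor_point_sep; first by rewrite !dyadic_digits0.
- exact: S_clique.
- exact: S_clique.
Qed.

End CantorScheme.

Theorem proposition6p7 (G : ptopologicalType)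
    (mul : G -> G -> G) (inv : G -> G) (one : G)
    (HG : is_topological_group mul inv one)
    (Hpolish : polish_space G)
    (Hnlc : ~ locally_compact [set: G])
    (K : set G) (HK : compact K) :
  right_haar_null mul K.
Proof.
have [_ [d [d_metric d_top d_complete]]] := Hpolish.
have G_hausdorff := induced_hausdorff d_metric d_top.
have E_closed := closed_rtranslate_rel HG G_hausdorff HK.
have E_escape := not_locally_compact_escape HG G_hausdorff Hnlc (compact_divset HG HK).
have f_measurable := measurable_cantor_point d_metric d_top d_complete E_closed E_escape.
have half_gt0 : (0 : RR) < 1 / 2 by lra.
exists K; split => //; first exact: closed_borel (compact_closed G_hausdorff HK).
exists (distribution (uniform_prob half_gt0) (mfun_Sub (mem_set f_measurable))) => g.
have Kg_borel := closed_borel (compact_closed G_hausdorff (compact_rtranslate HG K g HK)).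
apply: uniform_prob_subset1.
  by rewrite -[X in measurable X]setTI; exact: f_measurable.
(* [uniform_prob] lives on a closed interval; any one inside [0, 1[ will do. *)
have half_in_unit : {subset `[0, 1 / 2] <= `[0, 1[ : interval RR}.
  by move=> t; rewrite !in_itv /= => /andP[t_ge0 t_le]; apply/andP; split; lra.
move=> t t' [Kgt /half_in_unit t_in] [Kgt' /half_in_unit t'_in].
exact: (cantor_point_clique_inj d_metric d_top d_complete E_closed E_escape
  (rtranslate_rel_clique HG K g) t t' t_in t'_in Kgt Kgt').
Qed.
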